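(* Let $f(x,y)=x^2y+x^2+y^2-y\in\mathbb{Z}[x,y]$. Define $R^{(1)}(x,x_1)=f(x,x_1)$ and, for $n\ge2$, $R^{(n)}(x,x_n)=\mathrm{Res}_{x_{n-1}}\big(R^{(n-1)}(x,x_{n-1}),\,f(x_{n-1},x_n)\big)$, the resultant with respect to $x_{n-1}$; set $R_n(x)=R^{(n)}(x,x)$. Then for all $n\ge1$, $$R^{(n)}(x,x_n)\equiv(x^{2^n}+x_n)(x_n+1)^{2^n-1}\pmod 2,\qquad R_n(x)\equiv(x^{2^n}+x)(x+1)^{2^n-1}\pmod 2.$$
   Context: Congruences are coefficientwise congruences of polynomials with integer coefficients. *)

From HB Require Import structures.
From mathcomp Require Import all_boot all_order all_algebra.
Set Implicit Arguments. Unset Strict Implicit. Unset Printing Implicit Defensive.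
Import Order.TTheory GRing.Theory Num.Theory.
Local Open Scope ring_scope.

(* Bivariate integer polynomials Z[x][y]: inner variable x, outer variable y. *)
Notation bipoly := {poly {poly int}}.

Definition fxy : bipoly :=
  (('X : {poly int}) ^+ 2)%:P * 'X + (('X : {poly int}) ^+ 2)%:P + 'X ^+ 2 - 'X.

(* f(t, x_n) as a polynomial in t (= x_{n-1}) with coefficients in
   Z[x][x_n] (x_n is the outer variable 'X of bipoly). *)
Definition f_shift : {poly bipoly} :=
  'X ^+ 2 * ('X + 1 : bipoly)%:P + ('X ^+ 2 - 'X : bipoly)%:P.

(* Rsup n = R^{(n)}(x, x_n) for n >= 1 (Rsup 0 is an unused dummy = fxy).
   R^{(n)} = Res_{x_{n-1}} (R^{(n-1)}(x, x_{n-1}), f(x_{n-1}, x_n)). *)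
Fixpoint Rsup (n : nat) : bipoly :=
  match n with
  | 0 => fxy
  | m.+1 => if m is 0 then fxy
            else resultant (map_poly polyC (Rsup m)) f_shift
  end.

Definition Rdiag (n : nat) : {poly int} := (Rsup n).['X].

Definition cong2_bi (P Q : bipoly) : Prop :=
  forall i j : nat, (2 %| ((P - Q)`_i)`_j)%Z.
Definition cong2 (p q : {poly int}) : Prop :=
  forall i : nat, (2 %| (p - q)`_i)%Z.

From HB Require Import structures.
From mathcomp Require Import all_boot all_order all_algebra.
From mathcomp Require Import zify ring.
Set Implicit Arguments. Unset Strict Implicit. Unset Printing Implicit Defensive.
Import Order.TTheory GRing.Theory Num.Theory.
Local Open Scope ring_scope.

(* Right-multiplying the Sylvester matrix of [p] and [c (t^2 - z)] by a unitriangular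
   matrix reduces its first rows modulo [t^2 - z] and makes it block triangular, so
   that [Res_t (p, c (t^2 - z)) = c^(deg p) (E(z)^2 - z O(z)^2)] where
   [p = E(t^2) + t O(t^2)]; in characteristic 2, [E(z)^2 - z O(z)^2] is [p] with
   squared coefficients evaluated at [z].  Modulo 2, [f(t, y) = (y + 1) (t^2 - y)],
   so [R^(n+1)] is congruent to [(y + 1)^(2^n)] times [R^(n)] with squared
   coefficients, and the closed form follows by induction.  Reduction modulo 2
   commutes with the resultant as long as the leading coefficients survive, which
   holds because the Sylvester determinant bounds the [y]-degree of [R^(n)] by [2^n],
   the [y]-degree of its reduction. *)

Lemma leq_double_self n : (n <= n.*2)%N.
Proof. by rewrite -addnn leq_addr. Qed.

Lemma sum_ord_double (V : nmodType) n (F : nat -> V) :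
  \sum_(l < n.*2) F l = \sum_(i < n) (F i.*2 + F i.*2.+1).
Proof.
elim: n => [|n IHn]; first by rewrite !big_ord0.
by rewrite doubleS !big_ord_recr /= IHn addrA.
Qed.

Lemma size_map_poly_leq (R S : nzSemiRingType) (f : R -> S) (p : {poly R}) :
  (size (map_poly f p) <= size p)%N.
Proof. exact: size_poly. Qed.

Section EvenOddParts.
Variable K : comNzRingType.
Implicit Types (p : {poly K}) (z : K).

Lemma sum_coef_narrow p N (G : nat -> K) : (size p <= N)%N ->
  \sum_(l < N) p`_l * G l = \sum_(l < size p) p`_l * G l.
Proof.
move=> le_p_N; rewrite -(subnKC le_p_N) big_split_ord /= [X in _ + X]big1 ?addr0 //.
by move=> l _; rewrite nth_default ?mul0r ?leq_addr.
Qed.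

(* For [j < 2], [rem_X2 z j l] is the coefficient of [X^j] in [X^l] modulo [X^2 - z]. *)
Definition rem_X2 z (j l : nat) : K := if odd l == odd j then z ^+ l./2 else 0.

Lemma rem_X2S0 z l : rem_X2 z 0 l.+1 = z * rem_X2 z 1 l.
Proof.
by rewrite /rem_X2 /= uphalf_half; case: (odd l); rewrite ?mulr0 // add1n exprS.
Qed.

Lemma rem_X2S1 z l : rem_X2 z 1 l.+1 = rem_X2 z 0 l.
Proof. by rewrite /rem_X2 /= uphalf_half; case: (odd l). Qed.

Lemma rem_X2SS z j l : rem_X2 z j l.+2 = z * rem_X2 z j l.
Proof. by rewrite /rem_X2 /= negbK; case: ifP; rewrite ?mulr0 // exprS. Qed.

Lemma horner_even_poly_rem_X2 p z N : (size p <= N)%N ->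
  \sum_(l < N) p`_l * rem_X2 z 0 l = (even_poly p).[z].
Proof.
move=> le_p_N; rewrite sum_coef_narrow // -(sum_coef_narrow _ (leq_double_self _)).
rewrite (even_polyE (leq_double_self _)) horner_poly.
rewrite (sum_ord_double _ (fun l => p`_l * rem_X2 z 0 l)).
by apply: eq_bigr => i _; rewrite /rem_X2 /= odd_double doubleK mulr0 addr0.
Qed.

Lemma horner_odd_poly_rem_X2 p z N : (size p <= N)%N ->
  \sum_(l < N) p`_l * rem_X2 z 1 l = (odd_poly p).[z].
Proof.
move=> le_p_N; rewrite sum_coef_narrow // -(sum_coef_narrow _ (leq_double_self _)).
rewrite (odd_polyE (leqW (leq_double_self _))) horner_poly.
rewrite (sum_ord_double _ (fun l => p`_l * rem_X2 z 1 l)).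
by apply: eq_bigr => i _; rewrite /rem_X2 /= odd_double uphalf_double mulr0 add0r.
Qed.

Lemma horner_pFrobenius_pchar2 (pchar2 : (2 \in [pchar K])%N) p z :
  (even_poly p).[z] ^+ 2 - z * (odd_poly p).[z] ^+ 2
    = (map_poly (pFrobenius_aut pchar2) p).[z].
Proof.
set F := pFrobenius_aut pchar2.
have hornerF q : (map_poly F q).[z ^+ 2] = q.[z] ^+ 2.
  by rewrite -pFrobenius_autE horner_map.
rewrite -[in RHS](poly_even_odd p) rmorphD rmorphM /= !map_comp_poly.
rewrite rmorphXn /= map_polyX hornerD hornerM !horner_comp hornerX hornerXn.
by rewrite !hornerF (oppr_pchar2 pchar2) mulrC.
Qed.

End EvenOddParts.

Section SylvesterQuadratic.
Variable K : comNzRingType.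

Lemma det_castmx n n' (e : n = n') (A : 'M[K]_n) : \det (castmx (e, e) A) = \det A.
Proof. by case: n' / e in A *; rewrite castmx_id. Qed.

Lemma det_mx22 (A : 'M[K]_2) :
  \det A = A ord0 ord0 * A ord_max ord_max - A ord0 ord_max * A ord_max ord0.
Proof.
rewrite (expand_det_row _ 0) !big_ord_recl big_ord0 addr0 /cofactor !det_mx11 /=.
rewrite !mxE /= !expr0 !expr1 !mul1r mulN1r mulrN.
by congr (_ * _ - _ * _); congr (A _ _); exact: val_inj.
Qed.

Lemma sum_nat_delta n m (F : nat -> K) : (m < n)%N ->
  \sum_(l < n) ((l : nat) == m)%:R * F l = F m.
Proof.
move=> lt_mn; rewrite (bigD1 (Ordinal lt_mn)) //= eqxx mul1r big1 ?addr0 // => l.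
by rewrite -val_eqE => /negPf ->; rewrite mul0r.
Qed.

Definition Sylvester_mx2 (p q : {poly K}) d : 'M[K]_(2 + d) :=
  \matrix_(i, j) (if (i < 2)%N then p`_(j - i) *+ (i <= j)%N
                  else q`_(j - (i - 2)) *+ (i - 2 <= j)%N).

Lemma resultant_Sylvester_mx2 (p q : {poly K}) d :
  size p = d.+1 -> size q = 3 -> resultant p q = \det (Sylvester_mx2 p q d).
Proof.
move=> size_p size_q.
have e : ((size q).-1 + (size p).-1)%N = (2 + d)%N by rewrite size_p size_q.
rewrite /resultant -(det_castmx e); congr (\det _); apply/matrixP => i j.
rewrite castmxE Sylvester_mxE mxE /=.
case: (splitP (cast_ord (esym e) i)) => k /= ->.
  by have := ltn_ord k; rewrite {2}size_q => ->.
by rewrite size_q ltnNge leq_addr /= addKn.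
Qed.

Section EvenQuadratic.
Variables (p : {poly K}) (c z : K) (d : nat).
Hypothesis size_p : size p = d.+1.

Let q := c *: ('X^2 - z%:P).
Let S := Sylvester_mx2 p q d.

Lemma band_X2subC k l :
  q`_(l - k) *+ (k <= l)%N = (l == (k + 2)%N)%:R * c - (l == k)%:R * (c * z).
Proof.
rewrite coefZ coefB coefXn coefC.
have [lt_lk | le_kl] := ltnP l k.
  by rewrite mulr0n (ltn_eqF lt_lk) (ltn_eqF (ltn_addr 2 lt_lk)) !mul0r subr0.
have [m ->] : exists m, l = (k + m)%N by exists (l - k)%N; rewrite subnKC.
rewrite addKn mulr1n eqn_add2l -{2}[k]addn0 eqn_add2l.
by case: m => [|[|[|m]]] /=; ring.
Qed.

(* Right multiplication by [Umx] reduces the rows of [S] modulo [X^2 - z]. *)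
Definition Umx : 'M[K]_(2 + d) :=
  \matrix_(k, j) (if (j < 2)%N then rem_X2 z j k else ((k : nat) == j)%:R).

Lemma det_Umx : \det Umx = 1.
Proof.
rewrite det_trig; last first.
  apply/is_trig_mxP => i j lt_ij; rewrite mxE /rem_X2; case: ifP => [lt_j2|_].
    by move: lt_ij lt_j2; case: i j => [[|[|i]] ?] [[|[|j]] ?].
  by rewrite ltn_eqF.
by rewrite big1 // => i _; rewrite mxE /rem_X2 !eqxx; case: i => [[|[|i]] ?].
Qed.

Lemma dlsubmx_Sylvester_Umx : dlsubmx (S *m Umx) = 0.
Proof.
apply/matrixP => k j; rewrite !mxE.
under eq_bigr => l _ do rewrite !mxE /= addKn (ltn_ord j) band_X2subC mulrBl -!mulrA.
have lt_k2 : (k + 2 < 2 + d)%N by rewrite addnC ltn_add2l.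
rewrite sumrB (sum_nat_delta (fun l => c * rem_X2 z j l)) //.
rewrite (sum_nat_delta (fun l => c * (z * rem_X2 z j l))) ?ltn_addl //.
by rewrite addn2 rem_X2SS mulrA [c * z]mulrC subrr.
Qed.

Lemma rsubmx_mulmx_Umx m (A : 'M[K]_(m, 2 + d)) : rsubmx (A *m Umx) = rsubmx A.
Proof.
apply/matrixP => i j; rewrite !mxE (bigD1 (rshift 2 j)) //= mxE eqxx mulr1.
by rewrite big1 ?addr0 // => l; rewrite mxE -val_eqE => /negPf /= ->; rewrite mulr0.
Qed.

Lemma det_drsubmx_Sylvester_Umx : \det (drsubmx (S *m Umx)) = c ^+ d.
Proof.
have drE i j : drsubmx (S *m Umx) i j = q`_(2 + j - i) *+ (i <= 2 + j)%N.
  by rewrite /drsubmx -mul_dsub_mx rsubmx_mulmx_Umx !mxE /= addKn.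
rewrite det_trig; last first.
  apply/is_trig_mxP => i j lt_ij; rewrite drE band_X2subC addnC eqn_add2r.
  by rewrite (gtn_eqF lt_ij) (gtn_eqF (ltn_addr 2 lt_ij)) !mul0r subr0.
rewrite (eq_bigr (fun=> c)) ?prodr_const ?card_ord // => i _.
by rewrite drE band_X2subC addnC eqxx -{2}[i : nat]addn0 eqn_add2l mul1r mul0r subr0.
Qed.

Lemma det_ulsubmx_Sylvester_Umx :
  \det (ulsubmx (S *m Umx)) = (even_poly p).[z] ^+ 2 - z * (odd_poly p).[z] ^+ 2.
Proof.
have ulE i j :
    ulsubmx (S *m Umx) i j = \sum_(l < 2 + d) p`_(l - i) *+ (i <= l)%N * rem_X2 z j l.
  by rewrite !mxE; apply: eq_bigr => l _; rewrite !mxE /= (ltn_ord i) (ltn_ord j).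
have row1 j : \sum_(l < 2 + d) p`_(l - 1) *+ (1 <= l)%N * rem_X2 z j l
    = \sum_(l < 1 + d) p`_l * rem_X2 z j l.+1.
  by rewrite big_ord_recl mulr0n mul0r add0r; apply: eq_bigr => l _; rewrite subn1.
have le_p_1d : (size p <= 1 + d)%N by rewrite size_p.
have le_p_2d : (size p <= 2 + d)%N by rewrite size_p ltnW.
have e00 : \sum_(l < 2 + d) p`_(l - 0) *+ (0 <= l)%N * rem_X2 z 0 l = (even_poly p).[z].
  by under eq_bigr do rewrite subn0 mulr1n; exact: horner_even_poly_rem_X2.
have e01 : \sum_(l < 2 + d) p`_(l - 0) *+ (0 <= l)%N * rem_X2 z 1 l = (odd_poly p).[z].
  by under eq_bigr do rewrite subn0 mulr1n; exact: horner_odd_poly_rem_X2.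
have e10 : \sum_(l < 2 + d) p`_(l - 1) *+ (1 <= l)%N * rem_X2 z 0 l
    = z * (odd_poly p).[z].
  rewrite row1 -(horner_odd_poly_rem_X2 z le_p_1d) mulr_sumr.
  by apply: eq_bigr => l _; rewrite rem_X2S0 mulrCA.
have e11 : \sum_(l < 2 + d) p`_(l - 1) *+ (1 <= l)%N * rem_X2 z 1 l = (even_poly p).[z].
  rewrite row1 -(horner_even_poly_rem_X2 z le_p_1d).
  by apply: eq_bigr => l _; rewrite rem_X2S1.
by rewrite det_mx22 !ulE e00 e01 e10 e11; ring.
Qed.

Lemma size_scale_X2subC : c != 0 -> size q = 3.
Proof.
move=> c_neq0; apply/anti_leq/andP; split.
  by apply: leq_trans (size_scale_leq _ _) _; rewrite size_XnsubC.
rewrite ltnNge; apply: contra c_neq0 => /leq_sizeP/(_ 2 (leqnn 2)) <-.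
by rewrite coefZ coefB coefXn coefC /= subr0 mulr1.
Qed.

Lemma det_Sylvester_mx2_X2subC :
  \det S = c ^+ d * ((even_poly p).[z] ^+ 2 - z * (odd_poly p).[z] ^+ 2).
Proof.
rewrite -[\det S]mulr1 -det_Umx -det_mulmx -[S *m Umx]submxK dlsubmx_Sylvester_Umx.
by rewrite det_ublock det_ulsubmx_Sylvester_Umx det_drsubmx_Sylvester_Umx mulrC.
Qed.

End EvenQuadratic.

Lemma resultantZ_X2subC (p : {poly K}) c z : p != 0 -> c != 0 ->
  resultant p (c *: ('X^2 - z%:P))
    = c ^+ (size p).-1 * ((even_poly p).[z] ^+ 2 - z * (odd_poly p).[z] ^+ 2).
Proof.
rewrite -size_poly_gt0 => /prednK/esym size_p c_neq0.
rewrite (resultant_Sylvester_mx2 size_p (size_scale_X2subC z c_neq0)).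
exact: det_Sylvester_mx2_X2subC.
Qed.

End SylvesterQuadratic.

Lemma resultantZ_X2subC_pchar2 (K : comNzRingType) (pchar2 : (2 \in [pchar K])%N)
    (p : {poly K}) c z : p != 0 -> c != 0 ->
  resultant p (c *: ('X^2 - z%:P))
    = c ^+ (size p).-1 * (map_poly (pFrobenius_aut pchar2) p).[z].
Proof. by move=> p_neq0 c_neq0; rewrite resultantZ_X2subC // horner_pFrobenius_pchar2. Qed.

Lemma size_prod_leq_sum (R : nzRingType) I (r : seq I) (F : I -> {poly R}) (w : I -> nat) :
  (forall i, size (F i) <= (w i).+1)%N ->
  (size (\prod_(i <- r) F i)%R <= (\sum_(i <- r) w i).+1)%N.
Proof.
move=> le_F; elim/big_rec2: _ => [|i s P _ le_P]; first by rewrite size_poly1.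
by apply: leq_trans (size_polyMleq _ _) _; have := le_F i; lia.
Qed.

Lemma size_resultant_leq (R : comNzRingType) (p q : {poly {poly R}}) (a b : nat) :
    (forall i, size (p`_i)%R <= a.+1)%N -> (forall i, size (q`_i)%R <= b.+1)%N ->
  (size (resultant p q) <= (a * (size q).-1 + b * (size p).-1).+1)%N.
Proof.
move=> le_p le_q; rewrite /resultant /determinant.
apply: leq_trans (size_sum _ _ _) _; apply/bigmax_leqP => s _; rewrite size_Msign.
pose w (i : 'I_((size q).-1 + (size p).-1)) := if split i is inl _ then a else b.
have -> : (a * (size q).-1 + b * (size p).-1)%N = (\sum_i w i)%N.
  rewrite big_split_ord; congr (_ + _).
    rewrite (eq_bigr (fun=> a)) ?sum_nat_const ?card_ord 1?mulnC // => i _.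
    by rewrite /w (unsplitK (inl _ i) : split (lshift _ i) = _).
  rewrite (eq_bigr (fun=> b)) ?sum_nat_const ?card_ord 1?mulnC // => i _.
  by rewrite /w (unsplitK (inr _ i) : split (rshift _ i) = _).
apply: size_prod_leq_sum => i; rewrite Sylvester_mxE /w.
have size_mulrb (x : {poly R}) (e : bool) : (size (x *+ e) <= size x)%N.
  by case: e; rewrite ?mulr1n ?mulr0n ?size_poly0.
by case: (split i) => k; apply: leq_trans (size_mulrb _ _) _.
Qed.

Lemma lead_coef_map_neq0 (R S : nzSemiRingType) (f : {additive R -> S}) (p : {poly R}) :
  (size p <= size (map_poly f p))%N -> map_poly f p != 0 -> f (lead_coef p) != 0.
Proof.
move=> le_p; have size_fp : size (map_poly f p) = size p.
  by apply/anti_leq; rewrite le_p size_map_poly_leq.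
by rewrite -lead_coef_eq0 !lead_coefE size_fp coef_map.
Qed.

Lemma horner_map_polyC_X (R : nzRingType) (p : {poly R}) : (map_poly polyC p).['X] = p.
Proof.
rewrite horner_coef size_map_polyC -[RHS]coefK poly_def.
by apply: eq_bigr => i _; rewrite coef_map mul_polyC.
Qed.

Local Notation F2poly := {poly {poly 'F_2}}.
Local Notation red2 := (map_poly (map_poly ( *~%R (1 : 'F_2)))).

Lemma pchar_F2 : (2 \in [pchar 'F_2])%N.
Proof. exact: pchar_Fp. Qed.

Lemma pchar_F2poly : (2 \in [pchar F2poly])%N.
Proof. by rewrite !pchar_poly pchar_F2. Qed.

Lemma cong2_biP (P Q : bipoly) : cong2_bi P Q <-> red2 P = red2 Q.
Proof.
have red2_coef i j : (red2 (P - Q))`_i`_j = ((P - Q)`_i`_j)%:~R by rewrite !coef_map.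
split=> [PQ | eq_PQ i j].
  apply/eqP; rewrite -subr_eq0 -rmorphB; apply/eqP/polyP => i; apply/polyP => j.
  by rewrite red2_coef !coef0; apply/eqP; rewrite -(dvdz_pcharf pchar_F2).
by rewrite (dvdz_pcharf pchar_F2) -red2_coef rmorphB /= eq_PQ subrr !coef0.
Qed.

Lemma cong2_bi_horner_X (P Q : bipoly) : cong2_bi P Q -> cong2 P.['X] Q.['X].
Proof.
move=> /cong2_biP eq_PQ i; rewrite (dvdz_pcharf pchar_F2) -coef_map_id0 ?mulr0z //.
by rewrite rmorphB /= -!horner_map /= map_polyX eq_PQ subrr coef0.
Qed.

Definition Rsup2 (n : nat) : F2poly :=
  ((('X : {poly 'F_2}) ^+ (2 ^ n))%:P + 'X) * ('X + 1) ^+ (2 ^ n - 1).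

Lemma XaddC1 (R : nzRingType) : ('X + 1 : {poly R}) = 'X - (-1)%:P.
Proof. by rewrite rmorphN rmorph1 opprK. Qed.

Lemma size_Rsup2 n : size (Rsup2 n) = (2 ^ n).+1.
Proof.
rewrite /Rsup2 addrC XaddC1 size_monicM ?monicXaddC ?size_XaddC ?size_exp_XsubC //.
  by rewrite add2n subn1 prednK ?expn_gt0.
by rewrite -size_poly_gt0 size_exp_XsubC.
Qed.

Lemma resultant_Rsup2 m :
  resultant (map_poly polyC (Rsup2 m)) (('X + 1) *: ('X^2 - 'X%:P)) = Rsup2 m.+1.
Proof.
have pchar_Fx : (2 \in [pchar {poly 'F_2}])%N by rewrite pchar_poly pchar_F2.
rewrite (resultantZ_X2subC_pchar2 pchar_F2poly); first last.
- by rewrite -size_poly_eq0 XaddC1 size_XsubC.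
- by rewrite map_polyC_eq0 -size_poly_eq0 size_Rsup2.
have -> : map_poly (pFrobenius_aut pchar_F2poly) (map_poly polyC (Rsup2 m))
    = map_poly polyC (map_poly (pFrobenius_aut pchar_Fx) (Rsup2 m)).
  by apply/polyP => i; rewrite !coef_map /= !pFrobenius_autE rmorphXn.
rewrite horner_map_polyC_X size_map_polyC size_Rsup2 /Rsup2 rmorphM.
rewrite (rmorphXn (map_poly (pFrobenius_aut pchar_Fx))) !rmorphD /= map_polyC !map_polyX.
rewrite (rmorph1 (map_poly (pFrobenius_aut pchar_Fx))).
rewrite -[X in _ * ((X%:P + _) * _) = _]/('X^(2 ^ m) ^+ 2) -exprM -expnSr.
have -> : (2 ^ m.+1 - 1 = 2 ^ m + (2 ^ m - 1))%N.
  by rewrite expnS mul2n -addnn addnBA ?expn_gt0.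
by rewrite exprD; ring.
Qed.

Lemma red2_fxy : red2 fxy = Rsup2 1.
Proof.
rewrite /fxy /Rsup2 expn1 subn1 /= expr1 !rmorphB !rmorphD !rmorphM /= !map_polyC /=.
by rewrite !map_polyX (oppr_pchar2 pchar_F2poly); ring.
Qed.

Lemma red2_f_shift : map_poly red2 f_shift = ('X + 1) *: ('X^2 - 'X%:P).
Proof.
rewrite /f_shift rmorphD rmorphM rmorphXn /= !map_polyC map_polyX /= -mul_polyC.
rewrite !(rmorphB, rmorphD, rmorphXn, rmorph1, map_polyX) /=.
have pchar2 : (2 \in [pchar {poly F2poly}])%N by rewrite pchar_poly pchar_F2poly.
by rewrite !map_polyX !(oppr_pchar2 pchar2); ring.
Qed.

Lemma size_fxy : (size fxy <= 3)%N.
Proof.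
apply/leq_sizeP => j le3j; rewrite /fxy !(coefB, coefD, coefCM, coefXn, coefX, coefC).
by case: j le3j => [|[|[|j]]] //= _; rewrite mulr0 !addr0 subr0.
Qed.

Lemma size_coef_f_shift i : (size (f_shift`_i)%R <= 3)%N.
Proof.
rewrite /f_shift coefD coefMC coefXn coefC.
case: i => [|[|[|i]]] /=; rewrite ?mul0r ?mul1r ?add0r ?addr0 ?size_poly0 //.
  by rewrite size_polyDl ?size_polyN size_polyXn ?size_polyX.
by rewrite XaddC1 size_XsubC.
Qed.

Lemma size_f_shift : (size f_shift <= 3)%N.
Proof.
rewrite /f_shift mulrC mul_polyC; apply: leq_trans (size_polyD _ _) _.
rewrite geq_max (leq_trans (size_scale_leq _ _)) ?size_polyXn //.
exact: leq_trans (size_polyC_leq1 _) _.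
Qed.

Lemma size_Rsup_leq n : (0 < n)%N -> (size (Rsup n) <= (2 ^ n).+1)%N.
Proof.
elim: n => // [] [_ _ | m IHm _]; first exact: size_fxy.
have -> : Rsup m.+2 = resultant (map_poly polyC (Rsup m.+1)) f_shift by [].
have size_coefC i : (size ((map_poly polyC (Rsup m.+1))`_i)%R <= 1)%N.
  by rewrite coef_map size_polyC_leq1.
apply: leq_trans (size_resultant_leq size_coefC size_coef_f_shift) _.
rewrite mul0n add0n size_map_polyC ltnS (expnS _ m.+1) leq_mul2l /=.
by rewrite -subn1 leq_subLR add1n IHm.
Qed.

Lemma red2_Rsup n : (0 < n)%N -> red2 (Rsup n) = Rsup2 n.
Proof.
elim: n => // [] [_ _ | m IHm _]; first exact: red2_fxy.
have -> : Rsup m.+2 = resultant (map_poly polyC (Rsup m.+1)) f_shift by [].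
have red2C : map_poly red2 (map_poly polyC (Rsup m.+1)) = map_poly polyC (Rsup2 m.+1).
  by rewrite -IHm //; apply/polyP => i; rewrite !coef_map /= map_polyC.
have X1_neq0 : ('X + 1 : F2poly) != 0 by rewrite XaddC1 -size_poly_gt0 size_XsubC.
have size_q := size_scale_X2subC 'X X1_neq0.
rewrite map_resultant ?red2C ?red2_f_shift ?resultant_Rsup2 //.
- apply: lead_coef_map_neq0; rewrite red2C.
    by rewrite !size_map_polyC size_Rsup2 size_Rsup_leq.
  by rewrite map_polyC_eq0 -size_poly_gt0 size_Rsup2.
- apply: lead_coef_map_neq0; rewrite red2_f_shift.
    by rewrite size_q size_f_shift.
  by rewrite -size_poly_gt0 size_q.
Qed.

Lemma red2_Rsup_target n :
  red2 (((('X : {poly int}) ^+ (2 ^ n))%:P + 'X) * ('X + 1) ^+ (2 ^ n - 1)) = Rsup2 n.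
Proof.
rewrite rmorphM; congr (_ * _).
  by rewrite rmorphD /= map_polyC map_polyX /= rmorphXn /= map_polyX.
by rewrite rmorphXn rmorphD /= map_polyX rmorph1.
Qed.

Theorem proposition14 (n : nat) : (1 <= n)%N ->
  cong2_bi (Rsup n)
    (((('X : {poly int}) ^+ (2 ^ n))%:P + 'X) * ('X + 1) ^+ (2 ^ n - 1))
  /\
  cong2 (Rdiag n) (('X ^+ (2 ^ n) + 'X) * ('X + 1) ^+ (2 ^ n - 1)).
Proof.
move=> n_gt0.
have cong_Rsup : cong2_bi (Rsup n)
    (((('X : {poly int}) ^+ (2 ^ n))%:P + 'X) * ('X + 1) ^+ (2 ^ n - 1)).
  by apply/cong2_biP; rewrite red2_Rsup // red2_Rsup_target.
split=> //; have := cong2_bi_horner_X cong_Rsup.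
by rewrite /Rdiag !(hornerM, hornerD, horner_exp, hornerC, hornerX).
Qed.
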